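(* Consider the district heating network optimal control problem $\mathcal{OCP}_T(x_0)$ described in the context, where the functions $d$, $r$, $p$ are bounded on $[0,\infty)$. Suppose $\mathcal{OCP}_T(x_0)$ exhibits a time-varying exact turnpike with respect to some $\bar z\in Z^{1,1}([0,\infty),\mathrm{int}(\mathcal Z))$ (an infinite-horizon pair satisfying the dynamics and input constraints). If $\bar z$ is bounded, then $\mathcal{OCP}_T(x_0)$ is strictly dissipative with respect to $\bar z$, and this holds for every $\alpha$ of class $\mathcal K$.
   Context: Network model: $\mathcal{G}=(\mathcal{V},\mathcal{E})$ is a connected directed graph with vertices $\mathcal V=\{v_1,\dots,v_n\}$, $n\ge 2$; an edge $e=(u,v)$, $u\ne v$, is oriented in the direction of water flow and carries a constant mass flow $q_e>0$. Each vertex has a heat loss coefficient $\kappa_v>0$ (masses and heat capacity normalized to $1$, ambient temperature $0$). $A_L$ is the weighted flow Laplacian of $\mathcal G$ with weights $q_e$, and $A=-A_L-\mathrm{diag}([\kappa_v]_{v\in\mathcal V})$. There are $m$ producers $\mathcal P\subset\mathcal V$ and $w$ consumers $\mathcal D\subset\mathcal V\setminus\mathcal P$; $B\in\mathbb{R}^{n\times m}$ has $(B)_{ij}=1$ if $v_i$ is the $j$-th producer and $0$ otherwise, and $E\in\mathbb{R}^{n\times w}$ analogously for consumers. Dynamics: $\dot x=Ax+Bu+Ed(t)$, $x(0)=x_0\in\mathcal X_0$, $\mathcal X_0\subset\mathbb{R}^n$ compact. Inputs lie in the box $\mathcal U=\prod_{i=1}^m[(u_{\min})_i,(u_{\max})_i]\subset\mathbb{R}^m_{\ge0}$;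 $\mathcal Z=\mathbb{R}^n\times\mathcal U$. Stage cost $\ell(\tau,x,u)=\tfrac12x^\top Qx+u^\top Sx+x^\top r(\tau)+u^\top p(\tau)$ with $Q$ symmetric, $S\in\mathbb{R}^{m\times n}$, $r:[0,\infty)\to\mathbb{R}^n$, $p:[0,\infty)\to\mathbb{R}^m$. $\mathcal{OCP}_T(x_0)$: minimize $\int_0^T\ell(\tau,x(\tau),u(\tau))d\tau$ over $u\in L^1([0,T],\mathcal U)$ subject to the dynamics; optimal pairs are $z_T^\star(\cdot;x_0)=(x_T^\star,u_T^\star)$. $Z^{1,1}(I,\mathcal R_1\times\mathcal R_2)$ denotes pairs $(x,u)$ with $x\in W^{1,1}$, $u\in L^1$ on $I$. Strict dissipativity: with $\ell_{\bar z}(\tau,z)=\ell(\tau,z)-\ell(\tau,\bar z(\tau))$, $\mathcal{OCP}_T(x_0)$ is strictly dissipative with respect to $\bar z$ (for a given class-$\mathcal K$ function $\alpha$, i.e. continuous, monotonically increasing, $\alpha(0)=0$) if there exists a storage function $\mathcal S:\mathbb{R}\times\mathbb{R}^n\to\mathbb{R}_{\ge s}$, $s\ge0$, such that for all $x_0\in\mathcal X_0$, $T\ge0$ and along all optimal pairs: $\mathcal S(T,x_T^\star(T))-\mathcal S(0,x_0)\le\int_0^T\big(-\alpha(\|z_T^\star(\tau,x_0)-\bar z(\tau)\|)+\ell_{\bar z}(\tau,z_T^\star(\tau,x_0))\big)d\tau$. Exact turnpike: with $\Theta_T(\varepsilon)=\{\tau\in[0,T]:\|z_T^\star(\tau,x_0)-\bar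 z(\tau)\|>\varepsilon\}$, the problem exhibits a time-varying exact turnpike with respect to $\bar z$ if there is $\nu:[0,\infty)\to[0,\infty)$ such that for all $x_0\in\mathcal X_0$, all $T>0$ and all optimal $u_T^\star$, $\mu(\Theta_T(\varepsilon))\le\nu(\varepsilon)<\infty$ for all $\varepsilon\ge0$, in particular for $\varepsilon=0$ ($\mu$ Lebesgue measure). *)

From HB Require Import structures.
From mathcomp Require Import all_boot all_order all_algebra.
From mathcomp Require Import all_classical all_reals all_analysis.
Set Implicit Arguments. Unset Strict Implicit. Unset Printing Implicit Defensive.
Import Order.TTheory GRing.Theory Num.Theory.
Import numFieldNormedType.Exports.
Local Open Scope classical_set_scope.
Local Open Scope ring_scope.

Section DHN.
Variable R : realType.
Local Notation leb := (@lebesgue_measure R).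

(* Vertices are 'I_n; the edge set is a set of ordered pairs (u,v), oriented in
   the direction of flow; q u v is the mass flow on the edge (u,v). *)
Definition valid_network (n : nat) (Ed : {set 'I_n * 'I_n}) (q : 'I_n -> 'I_n -> R) :=
  [/\ (2 <= n)%N,
      (forall u v, (u, v) \in Ed -> u != v),
      (forall u v, (u, v) \in Ed -> 0 < q u v) &
      (forall u v, connect (fun a b => ((a, b) \in Ed) || ((b, a) \in Ed)) u v)].

Definition flow_laplacian n (Ed : {set 'I_n * 'I_n}) (q : 'I_n -> 'I_n -> R) : 'M[R]_n :=
  \matrix_(i, j)
    (if i == j then \sum_(k < n | (k, i) \in Ed) q k i
     else - ((if (j, i) \in Ed then q j i else 0))).

Definition sysA n Ed q (kappa : 'I_n -> R) : 'M[R]_n :=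
  - flow_laplacian Ed q - diag_mx (\row_i kappa i).

Definition incid n m (f : 'I_m -> 'I_n) : 'M[R]_(n, m) :=
  \matrix_(i, j) (if f j == i then 1 else 0).

Definition itv0 (T : R) : set R := [set t | 0 <= t <= T].

Definition vint k (D : set R) (f : R -> 'cV[R]_k) : 'cV[R]_k :=
  \col_i Rintegral leb D (fun t => f t i ord0).

Definition vintegrable k (D : set R) (f : R -> 'cV[R]_k) :=
  forall i, leb.-integrable D (fun t => (f t i ord0)%:E).

Definition vmeasurable k (D : set R) (f : R -> 'cV[R]_k) :=
  forall i, measurable_fun D (fun t => f t i ord0).

Definition vbounded k (D : set R) (f : R -> 'cV[R]_k) :=
  exists M : R, forall t, D t -> forall i, `|f t i ord0| <= M.

Definition znorm n m (x : 'cV[R]_n) (u : 'cV[R]_m) : R :=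
  Num.sqrt (\sum_i (x i ord0) ^+ 2 + \sum_j (u j ord0) ^+ 2).

Definition in_box m (umin umax u : 'cV[R]_m) :=
  forall j, umin j ord0 <= u j ord0 <= umax j ord0.
Definition in_open_box m (umin umax u : 'cV[R]_m) :=
  forall j, umin j ord0 < u j ord0 < umax j ord0.

Definition classK (alpha : R -> R) :=
  [/\ {within [set t | 0 <= t], continuous alpha},
      (forall a b, 0 <= a -> a < b -> alpha a < alpha b) &
      alpha 0 = 0].

Section OCP.
Variables (n m w : nat).
Variables (A : 'M[R]_n) (B : 'M[R]_(n, m)) (E : 'M[R]_(n, w)).
Variable d : R -> 'cV[R]_w.
Variables umin umax : 'cV[R]_m.
Variable ell : R -> 'cV[R]_n -> 'cV[R]_m -> R.

Definition rhs (x : R -> 'cV[R]_n) (u : R -> 'cV[R]_m) (t : R) : 'cV[R]_n :=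
  A *m x t + B *m u t + E *m d t.

(* (x,u) in Z^{1,1}([0,T], R^n x U) solving the dynamics with x(0) = x0:
   u measurable (and L^1) on [0,T] with values in U, and x absolutely continuous
   given by the integral (Caratheodory) form of the ODE. *)
Definition admissible (T : R) (x0 : 'cV[R]_n) (x : R -> 'cV[R]_n) (u : R -> 'cV[R]_m) :=
  [/\ vmeasurable (itv0 T) u,
      vintegrable (itv0 T) u,
      (forall t, itv0 T t -> in_box umin umax (u t)),
      vintegrable (itv0 T) (rhs x u) &
      (forall t, itv0 T t -> x t = x0 + vint (itv0 T `&` [set s | s <= t]) (rhs x u))].

Definition cost (T : R) (x : R -> 'cV[R]_n) (u : R -> 'cV[R]_m) : \bar R :=
  (\int[leb]_(t in itv0 T) (ell t (x t) (u t))%:E)%E.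

Definition optimal_pair (T : R) (x0 : 'cV[R]_n) x u :=
  admissible T x0 x u /\
  forall x' u', admissible T x0 x' u' -> (cost T x u <= cost T x' u')%E.

(* infinite horizon pair in Z^{1,1}_loc([0,oo), int Z) satisfying the dynamics *)
Definition interior_trajectory (xb : R -> 'cV[R]_n) (ub : R -> 'cV[R]_m) :=
  [/\ forall T, 0 <= T -> vmeasurable (itv0 T) ub,
      forall T, 0 <= T -> vintegrable (itv0 T) ub,
      (forall t, 0 <= t -> in_open_box umin umax (ub t)),
      (forall T, 0 <= T -> vintegrable (itv0 T) (rhs xb ub)) &
      (forall t, 0 <= t -> xb t = xb 0 + vint (itv0 t) (rhs xb ub))].

Definition Theta (T eps : R) x u (xb : R -> 'cV[R]_n) (ub : R -> 'cV[R]_m) : set R :=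
  [set t | itv0 T t /\ eps < znorm (x t - xb t) (u t - ub t)].

Definition exact_turnpike (X0 : set 'cV[R]_n) xb ub :=
  exists nu : R -> R,
    forall x0, X0 x0 -> forall T, 0 < T -> forall x u, optimal_pair T x0 x u ->
      forall eps, 0 <= eps -> (leb (Theta T eps x u xb ub) <= (nu eps)%:E)%E.

Definition strictly_dissipative (X0 : set 'cV[R]_n) xb ub (alpha : R -> R) :=
  exists (S : R -> 'cV[R]_n -> R) (s : R),
    0 <= s /\ (forall t x, s <= S t x) /\
    forall x0, X0 x0 -> forall T, 0 <= T -> forall x u, optimal_pair T x0 x u ->
      ((S T (x T) - S 0 x0)%:E <=
        \int[leb]_(t in itv0 T)
          (- alpha (znorm (x t - xb t) (u t - ub t))
           + (ell t (x t) (u t) - ell t (xb t) (ub t)))%:E)%E.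

End OCP.

Definition stage_cost n m (Q : 'M[R]_n) (S : 'M[R]_(m, n)) (r : R -> 'cV[R]_n)
  (p : R -> 'cV[R]_m) (t : R) (x : 'cV[R]_n) (u : 'cV[R]_m) : R :=
  (2^-1 * (x^T *m Q *m x) ord0 ord0 + (u^T *m S *m x) ord0 ord0
   + (x^T *m r t) ord0 ord0 + (u^T *m p t) ord0 ord0).

End DHN.

(* The storage function is c * nu(0) at time 0 and 0 afterwards.  Along an optimal
   pair the dissipation integrand -alpha(|z - zb|) + l(z) - l(zb) vanishes outside
   Theta_T(0), whose measure is at most nu(0) by the exact turnpike, and it is bounded
   below by -c because optimal states are bounded uniformly in x0 and T: every window of
   length H > nu(0) contains the initial time or a time where x meets the bounded
   reference xb, and a Gronwall-type estimate for the linear dynamics with bounded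
   inputs bounds the growth of |x| over a window of fixed length. *)

From HB Require Import structures.
From mathcomp Require Import all_boot all_order all_algebra.
From mathcomp Require Import all_classical all_reals all_analysis.
From mathcomp Require Import measurable_realfun lra ring.
Import Order.TTheory GRing.Theory Num.Theory.
Import numFieldNormedType.Exports HBNNSimple.
Local Open Scope classical_set_scope.
Local Open Scope ring_scope.
Set Implicit Arguments. Unset Strict Implicit. Unset Printing Implicit Defensive.

Section matrix_norm.
Variable K : realDomainType.

Lemma mxentry_le_norm a b (M : 'M[K]_(a, b)) i j : `|M i j| <= `|M|.
Proof.
rewrite (_ : `|M| = mx_norm M) // mx_normrE.
exact: (le_bigmax _ (fun ij : 'I_a * 'I_b => `|M ij.1 ij.2|) (i, j)).
Qed.

Lemma mx_norm_le a b (M : 'M[K]_(a, b)) c :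
  0 <= c -> (forall i j, `|M i j| <= c) -> `|M| <= c.
Proof.
move=> c0 Mc; rewrite (_ : `|M| = mx_norm M) // mx_normrE.
by apply: bigmax_le => // ij _; exact: Mc.
Qed.

Lemma norm_trmx a b (M : 'M[K]_(a, b)) : `|M^T| = `|M|.
Proof.
apply/le_anti; rewrite !mx_norm_le // => i j.
  by have := mxentry_le_norm M^T j i; rewrite mxE.
by rewrite mxE mxentry_le_norm.
Qed.

Lemma norm_mulmx_le a k b (M : 'M[K]_(a, k)) (N : 'M[K]_(k, b)) :
  `|M *m N| <= k%:R * `|M| * `|N|.
Proof.
apply: mx_norm_le => [|i j]; first by rewrite !mulr_ge0.
rewrite mxE; apply: le_trans (ler_norm_sum _ _ _) _.
rewrite -mulrA mulr_natl -[k in _ *+ k]card_ord -sumr_const.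
apply: ler_sum => l _.
by rewrite normrM ler_pM // mxentry_le_norm.
Qed.

Lemma norm_bilinear_le a b (v : 'cV[K]_a) (M : 'M[K]_(a, b)) (y : 'cV[K]_b) :
  `|(v^T *m M *m y) ord0 ord0| <= a%:R * b%:R * `|M| * (`|v| * `|y|).
Proof.
apply: le_trans (mxentry_le_norm _ _ _) _; apply: le_trans (norm_mulmx_le _ _) _.
apply: le_trans (ler_wpM2r _ (ler_wpM2l _ (norm_mulmx_le _ _))) _ => //.
by rewrite norm_trmx [leLHS](_ : _ = a%:R * b%:R * `|M| * (`|v| * `|y|)) //; ring.
Qed.

Lemma norm_dot_le a (v y : 'cV[K]_a) : `|(v^T *m y) ord0 ord0| <= a%:R * (`|v| * `|y|).
Proof.
apply: le_trans (mxentry_le_norm _ _ _) _.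
by rewrite mulrA -(norm_trmx v) norm_mulmx_le.
Qed.

End matrix_norm.

Section znorm.
Variables (R : realType) (n m : nat).
Implicit Types (x : 'cV[R]_n) (u : 'cV[R]_m).

Lemma znorm_ge0 x u : 0 <= znorm x u.
Proof. exact: sqrtr_ge0. Qed.

Lemma norm_le_znorml x u : `|x| <= znorm x u.
Proof.
apply: mx_norm_le (znorm_ge0 x u) _ => i j; rewrite (ord1 j).
rewrite /znorm -sqrtr_sqr ler_wsqrtr // (bigD1 i) //= -addrA lerDl.
by rewrite addr_ge0 // sumr_ge0 // => *; exact: sqr_ge0.
Qed.

Lemma norm_le_znormr x u : `|u| <= znorm x u.
Proof.
apply: mx_norm_le (znorm_ge0 x u) _ => i j; rewrite (ord1 j).
rewrite /znorm -sqrtr_sqr ler_wsqrtr // [X in _ + X](bigD1 i) //= addrCA lerDl.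
by rewrite addr_ge0 // sumr_ge0 // => *; exact: sqr_ge0.
Qed.

Lemma sum_sqr_le k (v : 'cV[R]_k) : \sum_i v i ord0 ^+ 2 <= k%:R * `|v| ^+ 2.
Proof.
rewrite mulr_natl -[k in _ *+ k]card_ord -sumr_const; apply: ler_sum => i _.
by rewrite -real_normK ?num_real // lerXn2r ?nnegrE // mxentry_le_norm.
Qed.

Lemma znorm_le x u : znorm x u <= n%:R * `|x| + m%:R * `|u|.
Proof.
have c0 : 0 <= n%:R * `|x| + m%:R * `|u| by rewrite addr_ge0 ?mulr_ge0.
rewrite /znorm -(ger0_norm c0) -sqrtr_sqr ler_wsqrtr //.
have nat_le_sqr k : k%:R <= k%:R ^+ 2 :> R.
  by rewrite -natrX ler_nat; case: k => // k; rewrite expnS leq_pmulr // expn_gt0.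
have := ler_wpM2r (sqr_ge0 `|x|) (nat_le_sqr n).
have := ler_wpM2r (sqr_ge0 `|u|) (nat_le_sqr m).
have := sum_sqr_le x; have := sum_sqr_le u.
have : 0 <= n%:R * `|x| * (m%:R * `|u|) by rewrite !mulr_ge0.
nra.
Qed.

Lemma znorm0 : znorm (0 : 'cV[R]_n) (0 : 'cV[R]_m) = 0.
Proof. by rewrite /znorm !big1 ?addr0 ?sqrtr0 // => i _; rewrite mxE expr0n. Qed.

Lemma znorm_le0 x u : znorm x u <= 0 -> x = 0 /\ u = 0.
Proof.
move=> z0; split; apply/eqP; rewrite -normr_le0.
  exact: le_trans (norm_le_znorml x u) z0.
exact: le_trans (norm_le_znormr x u) z0.
Qed.

End znorm.

Section window_bound.
Variable R : realType.

Lemma le_double_of_halving (I : set R) (phi : R -> R) c :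
  (exists M, forall t, I t -> phi t <= M) ->
  (forall M, (forall t, I t -> phi t <= M) -> forall t, I t -> phi t <= c + M / 2) ->
  forall t, I t -> phi t <= 2 * c.
Proof.
move=> [M0 phiM0] halving t It.
have supP : has_sup (phi @` I).
  by split; [exists (phi t), t | exists M0 => _ [s Is <-]; exact: phiM0].
have le_sup s : I s -> phi s <= sup (phi @` I).
  by move=> Is; apply: sup_upper_bound => //; exists s.
have : sup (phi @` I) <= c + sup (phi @` I) / 2.
  by apply: ge_sup => [|_ [s Is <-]]; [exists (phi t), t | exact: halving].
by have := le_sup t It; lra.
Qed.

Definition linear_growth (L C a b : R) (phi : R -> R) :=
  forall s t M, a <= s -> s <= t -> t <= b ->
    (forall r, s <= r <= t -> phi r <= M) -> phi t <= phi s + (t - s) * (L * M + C).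

Lemma linear_growth_sub (L C a b a' b' : R) (phi : R -> R) : a <= a' -> b' <= b ->
  linear_growth L C a b phi -> linear_growth L C a' b' phi.
Proof.
move=> aa' b'b growth s t M a's st tb'.
by apply: growth => //; [exact: le_trans a's | exact: le_trans b'b].
Qed.

Lemma short_window_bound (L C a b : R) (phi : R -> R) :
  0 <= L -> 0 <= C -> L * (b - a) <= 2^-1 ->
  (forall t, a <= t <= b -> 0 <= phi t) -> (exists M, forall t, a <= t <= b -> phi t <= M) ->
  linear_growth L C a b phi -> forall t, a <= t <= b -> phi t <= 2 * (phi a + (b - a) * C).
Proof.
move=> L0 C0 Lh phi0 phiB growth.
apply: le_double_of_halving => // M phiM t /andP[a_le_t tb].
have ab := le_trans a_le_t tb.
have M0 : 0 <= M by apply: le_trans (phi0 a _) (phiM a _); rewrite lexx ab.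
have : phi t <= phi a + (t - a) * (L * M + C).
  by apply: growth => // r /andP[ar rt]; apply: phiM; rewrite ar (le_trans rt tb).
have LMC0 : 0 <= L * M + C by rewrite addr_ge0 ?mulr_ge0.
have := ler_wpM2r LMC0 (lerB tb (lexx a)).
have := ler_wpM2r M0 Lh.
lra.
Qed.

Lemma window_bound (L C H B : R) : 0 <= L -> 0 <= C -> 0 < H ->
  exists K, forall (phi : R -> R) a b, b <= a + H -> phi a <= B ->
    (forall t, a <= t <= b -> 0 <= phi t) -> (exists M, forall t, a <= t <= b -> phi t <= M) ->
    linear_growth L C a b phi -> forall t, a <= t <= b -> phi t <= K.
Proof.
(* Cut the window into k steps of length h with L * h <= 1/2. *)
move=> L0 C0 H0; pose k := (Num.trunc (2 * L * H)).+1; pose h := H / k%:R.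
pose f x := 2 * (x + h * C).
exists (iter k f B) => phi a b bH phiaB phi0 [M phiM] growth t /andP[a_le_t t_le_b].
have k0 : 0 < k%:R :> R by rewrite ltr0n.
have h0 : 0 <= h by rewrite divr_ge0 // ltW.
have hk : h * k%:R = H by rewrite mulfVK // gt_eqF.
have Lh : L * h <= 2^-1.
  have : 2 * L * H < k%:R by apply: truncnS_gt.
  rewrite -hk; nra.
have B0 : 0 <= B by apply: le_trans (phi0 a _) phiaB; rewrite lexx (le_trans a_le_t).
have iter_ge0 j : 0 <= iter j f B.
  by elim: j => //= j IH; rewrite mulr_ge0 // addr_ge0 // mulr_ge0.
have le_f x : 0 <= x -> x <= f x by rewrite /f; have := mulr_ge0 h0 C0; lra.
suff steps j s : a <= s <= b -> s <= a + j%:R * h -> phi s <= iter j f B.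
  by apply: (steps k); rewrite ?a_le_t // mulrC hk (le_trans t_le_b).
elim: j s => [|j IH] s /andP[a_le_s s_le_b] sj.
  by rewrite mul0r addr0 in sj; have -> : s = a by apply/le_anti; rewrite sj.
have [s_le_aj|aj_lt_s] := leP s (a + j%:R * h).
  by apply: le_trans (le_f _ (iter_ge0 j)); apply: IH; rewrite ?a_le_s.
set a' := a + j%:R * h in aj_lt_s *.
have a_le_a' : a <= a' by rewrite lerDl mulr_ge0.
have a'_le_b : a' <= b by rewrite (le_trans (ltW aj_lt_s)).
have in_ab r : a' <= r <= s -> a <= r <= b.
  by case/andP=> a'r rs; rewrite (le_trans a_le_a') ?(le_trans rs).
have s_a'_le_h : s - a' <= h by move: sj; rewrite -addn1 natrD mulrDl mul1r /a'; lra.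
have phis : phi s <= 2 * (phi a' + (s - a') * C).
  apply: (@short_window_bound L) => //.
  - by rewrite (le_trans _ Lh) // ler_wpM2l.
  - by move=> r /in_ab; apply: phi0.
  - by exists M => r /in_ab; apply: phiM.
  - exact: linear_growth_sub growth.
  - by rewrite lexx ltW.
apply: le_trans phis _; rewrite /= /f ler_pM2l // lerD //.
  by apply: IH; rewrite ?a_le_a'.
by rewrite ler_wpM2r.
Qed.

End window_bound.


Section lebesgue_outer.
Variable R : realType.
Local Notation mu := (@lebesgue_measure R).

Lemma le_lebesgue_measure (A B : set R) : A `<=` B -> (mu A <= mu B)%E.
Proof.
move=> AB; rewrite /lebesgue_measure /lebesgue_stieltjes_measure /measure_extension.
exact: le_outer_measure.
Qed.

Lemma exists_nmem_measure_lt (Th : set R) a b :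
  (mu Th < (b - a)%:E)%E -> exists2 s, a <= s <= b & ~ Th s.
Proof.
move=> Thab; apply: contrapT => /forall2NP inTh.
have ab : a < b by rewrite -subr_gt0 -lte_fin (le_lt_trans (measure_ge0 _ _) Thab).
have : `[a, b]%classic `<=` Th.
  move=> s /=; rewrite in_itv /= => sab.
  by have [|] := inTh s => // /contrapT.
move/le_lebesgue_measure; rewrite lebesgue_measure_itv /= lte_fin ab -EFinD.
by move/(lt_le_trans Thab); rewrite ltxx.
Qed.

(* [Th] need not be measurable: the simple functions below [g] are supported in
   measurable subsets of [Th], and [mu] is monotone as an outer measure. *)
Lemma integral_le_mul_measure (D Th : set R) (g : R -> \bar R) c : 0 <= c ->
  (forall t, D t -> (0 <= g t <= c%:E)%E) -> (forall t, D t -> ~ Th t -> g t = 0%E) ->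
  (\int[mu]_(t in D) g t <= c%:E * mu Th)%E.
Proof.
move=> c0 g0c gTh; rewrite ge0_integralE => [|t /g0c /andP[] //].
apply: ge_ereal_sup => _ [h hg <-].
pose A := h @^-1` `]0, +oo[%classic.
have mA : measurable A by apply: measurable_funPTI; exact: measurable_itv.
have hpos t : 0 < h t -> Th t /\ h t <= c.
  move=> ht; move: (hg t); rewrite /patch; case: ifPn => [/set_mem Dt|_].
    have [Tht|nTht] := pselect (Th t); last by rewrite gTh // lee_fin leNgt ht.
    by move=> /le_trans/(_ (andP (g0c t Dt)).2); rewrite lee_fin.
  by rewrite lee_fin leNgt ht.
have h_le t : h t <= c * \1_A t.
  have [ht0|ht0] := leP (h t) 0; first by rewrite (le_trans ht0) ?mulr_ge0.
  have At : A t by rewrite /A /= in_itv /= ht0.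
  by rewrite indicE mem_set // mulr1; case: (hpos t ht0).
rewrite -integralT_nnsfun; apply: (@le_trans _ _ (\int[mu]_t (c * \1_A t)%:E))%E.
  apply: ge0_le_integral => //.
  - by move=> t _; rewrite lee_fin.
  - exact/measurable_EFinP.
  - exact/measurable_EFinP/measurable_funM.
  - by move=> t _; rewrite lee_fin.
under eq_integral do rewrite EFinM.
rewrite ge0_integralZl //; last exact/measurable_EFinP/measurable_indic.
rewrite integral_indic // setIT lee_wpmul2l ?lee_fin //.
by apply: le_lebesgue_measure => t; rewrite /A /= in_itv /= andbT => /hpos[].
Qed.

Lemma integral_geN_mul_measure (D Th : set R) (f : R -> R) c : 0 <= c ->
  (forall t, D t -> ~ Th t -> 0 <= f t) -> (forall t, D t -> - c <= f t) ->
  (- (c%:E * mu Th) <= \int[mu]_(t in D) (f t)%:E)%E.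
Proof.
move=> c0 fTh fc; rewrite integralE.
have pos0 : (0 <= \int[mu]_(t in D) ((EFin \o f)^\+ t))%E by apply: integral_ge0.
have neg_le : (\int[mu]_(t in D) ((EFin \o f)^\- t) <= c%:E * mu Th)%E.
  apply: integral_le_mul_measure => // t Dt; rewrite funenegE /=.
    by rewrite le_max lexx orbT /= ge_max !lee_fin c0 lerNl fc.
  by move=> nTh; apply/max_idPr; rewrite lee_fin lerNl oppr0 fTh.
by have := leeB pos0 neg_le; rewrite add0e.
Qed.

End lebesgue_outer.

Section interval_integral.
Variable R : realType.
Local Notation mu := (@lebesgue_measure R).

Lemma integrable_cst_itv (a b c : R) : mu.-integrable `]a, b] (EFin \o cst c).
Proof.
apply/integrableP; split; first exact/measurable_EFinP/measurable_cst.
rewrite (_ : (fun x => _) = cst `|c|%:E); last exact/funext.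
rewrite integral_cst //= lebesgue_measure_itv /=.
by case: ifP => _; rewrite ?mule0 -?EFinB -?EFinM ltry.
Qed.

Lemma normr_Rintegral_itv_le (g : R -> R) (s t c : R) : s <= t ->
  mu.-integrable `]s, t] (EFin \o g) -> (forall r, s < r <= t -> `|g r| <= c) ->
  `|\int[mu]_(r in `]s, t]) g r| <= c * (t - s).
Proof.
move=> st ig gc; apply: le_trans (le_normr_Rintegral _ ig) _ => //.
have -> : c * (t - s) = \int[mu]_(r in `]s, t]) c.
  rewrite Rintegral_cst //; have /= -> := lebesgue_measure_itv `]s, t]; rewrite lte_fin.
  by case: ltgtP st => // <- _; rewrite subrr mulr0.
by apply: le_Rintegral => //; [exact: integrable_norm | exact: integrable_cst_itv].
Qed.

End interval_integral.

Section admissible_state.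
Variables (R : realType) (n m w : nat).
Variables (A : 'M[R]_n) (B : 'M[R]_(n, m)) (E : 'M[R]_(n, w)).
Variables (d : R -> 'cV[R]_w) (umin umax : 'cV[R]_m).
Local Notation mu := (@lebesgue_measure R).

Lemma itv0E (T : R) : itv0 T = `[0, T]%classic.
Proof. by apply/seteqP; split => s /=; rewrite in_itv. Qed.

Lemma itv0I_le (T t : R) : t <= T -> itv0 T `&` [set s | s <= t] = `[0, t]%classic.
Proof.
move=> tT; apply/seteqP; split => s /=; rewrite in_itv /=; first by case=> /andP[-> _].
by case/andP=> s0 st; split => //; rewrite /itv0 /= s0 (le_trans st).
Qed.

Lemma norm_rhs_le x u t : `|rhs A B E d x u t| <=
  n%:R * `|A| * `|x t| + m%:R * `|B| * `|u t| + w%:R * `|E| * `|d t|.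
Proof.
apply: le_trans (ler_normD _ _) _; rewrite lerD ?norm_mulmx_le //.
by apply: le_trans (ler_normD _ _) _; rewrite lerD ?norm_mulmx_le.
Qed.

Variables (T : R) (x0 : 'cV[R]_n) (x : R -> 'cV[R]_n) (u : R -> 'cV[R]_m).
Hypothesis xu_adm : admissible A B E d umin umax T x0 x u.

Lemma admissible_integrable t i : t <= T ->
  mu.-integrable `[0, t] (fun s => (rhs A B E d x u s i ord0)%:E).
Proof.
case: xu_adm => _ _ _ + _ tT => /(_ i); rewrite itv0E; apply: integrableS => //.
by move=> s /=; rewrite !in_itv /= => /andP[-> /le_trans->].
Qed.

Lemma admissible_stateE t i : 0 <= t <= T ->
  x t i ord0 = x0 i ord0 + \int[mu]_(s in `[0, t]) rhs A B E d x u s i ord0.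
Proof.
case: xu_adm => _ _ _ _ xE /[dup] t0T /andP[_ tT].
by rewrite xE // itv0I_le // !mxE.
Qed.

Lemma admissible_state0 : 0 <= T -> x 0 = x0.
Proof.
move=> T0; apply/matrixP => i j; rewrite (ord1 j) admissible_stateE ?lexx ?T0 //.
by rewrite set_itv1 Rintegral_set1 addr0.
Qed.

Lemma admissible_state_bounded : exists K, forall t, 0 <= t <= T -> `|x t| <= K.
Proof.
pose g i s := `|rhs A B E d x u s i ord0|.
have g_int_ge0 i D : 0 <= \int[mu]_(s in D) g i s.
  by apply: Rintegral_ge0 => s _; exact: normr_ge0.
exists (`|x0| + \sum_i \int[mu]_(s in `[0, T]) g i s) => t /[dup] t0T /andP[t0 tT].
apply: mx_norm_le => [|i j]; first by rewrite addr_ge0 ?sumr_ge0.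
rewrite (ord1 j) admissible_stateE //; apply: le_trans (ler_normD _ _) _.
rewrite lerD ?mxentry_le_norm //.
apply: le_trans (le_normr_Rintegral _ (admissible_integrable i tT)) _ => //.
have gT : mu.-integrable `[0, T] (EFin \o g i).
  exact/integrable_norm/admissible_integrable.
have := Rintegral_itvB gT (x := t); rewrite !bnd_simp => /(_ t0 tT) g_split.
have le_T : \int[mu]_(s in `[0, t]) g i s <= \int[mu]_(s in `[0, T]) g i s.
  by rewrite -subr_ge0 g_split.
by apply: le_trans le_T _; rewrite (bigD1 i) //= lerDl sumr_ge0.
Qed.

Lemma admissible_linear_growth (Ku Kd : R) :
  (forall t, 0 <= t <= T -> `|u t| <= Ku) -> (forall t, 0 <= t <= T -> `|d t| <= Kd) ->
  linear_growth (n%:R * `|A|) (m%:R * `|B| * Ku + w%:R * `|E| * Kd) 0 T (fun t => `|x t|).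
Proof.
move=> uK dK s t M s0 st tT xM /=.
have t0T : 0 <= t <= T by rewrite (le_trans s0 st) tT.
have M0 : 0 <= M by apply: le_trans (normr_ge0 (x t)) (xM t _); rewrite st lexx.
have Ku0 : 0 <= Ku := le_trans (normr_ge0 _) (uK t t0T).
have Kd0 : 0 <= Kd := le_trans (normr_ge0 _) (dK t t0T).
apply: mx_norm_le => [|i j].
  by rewrite addr_ge0 // mulr_ge0 ?subr_ge0 // !addr_ge0 ?mulr_ge0.
rewrite (ord1 j); have ig := admissible_integrable i tT.
have := Rintegral_itvB ig (x := s); rewrite !bnd_simp => /(_ s0 st).
move=> g_split.
have -> : x t i ord0 = x s i ord0 + \int[mu]_(r in `]s, t]) rhs A B E d x u r i ord0.
  by rewrite -g_split !admissible_stateE ?s0 ?(le_trans st) //; ring.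
apply: le_trans (ler_normD _ _) (lerD (mxentry_le_norm _ _ _) _).
rewrite mulrC; apply: normr_Rintegral_itv_le => //.
  by apply: integrableS ig => // r /=; rewrite !in_itv /= => /andP[/(le_lt_trans s0)/ltW->].
move=> r /andP[sr rt]; have r0T : 0 <= r <= T by rewrite (le_trans s0 (ltW sr)) (le_trans rt).
apply: le_trans (mxentry_le_norm _ i ord0) _; apply: le_trans (norm_rhs_le _ _ _) _.
rewrite -addrA lerD ?lerD ?ler_wpM2l ?mulr_ge0 ?uK ?dK //.
by apply: xM; rewrite (ltW sr).
Qed.

End admissible_state.

Section bounds.
Variable R : realType.

Lemma vbounded_norm k (D : set R) (f : R -> 'cV[R]_k) :
  vbounded D f -> exists K, forall t, D t -> `|f t| <= K.
Proof.
case=> M fM; exists `|M| => t Dt; apply: mx_norm_le => // i j.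
by rewrite (ord1 j) (le_trans (fM t Dt i)) ?ler_norm.
Qed.

Lemma in_box_norm_le m (umin umax v : 'cV[R]_m) :
  (forall j, 0 <= umin j ord0) -> in_box umin umax v -> `|v| <= `|umax|.
Proof.
move=> umin0 vbox; apply: mx_norm_le => // j k; rewrite (ord1 k).
have /andP[uv vu] := vbox j; rewrite ger0_norm ?(le_trans (umin0 j)) //.
exact: le_trans vu (le_trans (ler_norm _) (mxentry_le_norm _ _ _)).
Qed.

Lemma compact_norm_bounded (V : normedModType R) (K : set V) :
  compact K -> exists M, forall x, K x -> `|x| <= M.
Proof.
move=> /compact_bounded[M [_ MK]]; exists (`|M| + 1); apply: MK.
by rewrite (le_lt_trans (ler_norm M)) ?ltrDl.
Qed.

Lemma classK_le (alpha : R -> R) a b : classK alpha -> 0 <= a -> a <= b -> alpha a <= alpha b.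
Proof.
case=> _ alpha_incr _ a0; rewrite le_eqVlt => /predU1P[-> //|ab].
exact/ltW/alpha_incr.
Qed.

End bounds.

Section turnpike.
Variables (R : realType) (n m w : nat).
Variables (A : 'M[R]_n) (B : 'M[R]_(n, m)) (E : 'M[R]_(n, w)).
Variables (d : R -> 'cV[R]_w) (umin umax : 'cV[R]_m).
Variable ell : R -> 'cV[R]_n -> 'cV[R]_m -> R.
Variables (X0 : set 'cV[R]_n) (xb : R -> 'cV[R]_n) (ub : R -> 'cV[R]_m).
Hypothesis turnpike : exact_turnpike A B E d umin umax ell X0 xb ub.

Lemma notin_Theta0 T x u t : itv0 T t -> ~ Theta T 0 x u xb ub t -> x t = xb t /\ u t = ub t.
Proof.
move=> tT notTheta.
have /znorm_le0[/subr0_eq -> /subr0_eq ->] // : znorm (x t - xb t) (u t - ub t) <= 0.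
by rewrite leNgt; apply/negP => pos; apply: notTheta.
Qed.

Lemma strictly_dissipative_turnpike (alpha : R -> R) (c : R) : alpha 0 = 0 -> 0 <= c ->
  (forall x0, X0 x0 -> forall T x u, optimal_pair A B E d umin umax ell T x0 x u ->
   forall t, itv0 T t ->
   - c <= - alpha (znorm (x t - xb t) (u t - ub t)) + (ell t (x t) (u t) - ell t (xb t) (ub t))) ->
  strictly_dissipative A B E d umin umax ell X0 xb ub alpha.
Proof.
move=> alpha0 c0 lower; have [nu nuP] := turnpike.
exists (fun t _ => if t == 0 then c * `|nu 0| else 0), 0; split => //; split.
  by move=> t _; case: ifP => // _; rewrite mulr_ge0.
move=> x0 X0x0 T T0 x u opt.
have int_ge := integral_geN_mul_measure (Th := Theta T 0 x u xb ub) c0 _ (lower _ X0x0 _ _ _ opt).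
apply: le_trans (int_ge _); last first.
  by move=> t tT /(notin_Theta0 tT) [-> ->]; rewrite !subrr znorm0 alpha0 oppr0 addr0.
rewrite (eqxx (0 : R)).
have [->|T_neq0] := eqVneq T 0.
  rewrite subrr leeNr oppe0 -(mule0 c%:E) lee_wpmul2l ?lee_fin //.
  apply: le_trans (le_lebesgue_measure (B := `[0, 0]%classic) _) _.
    by move=> t [/=]; rewrite in_itv.
  by have /= -> := lebesgue_measure_itv `[0, 0]; rewrite ltxx.
rewrite sub0r EFinN leeN2 EFinM lee_wpmul2l ?lee_fin //.
have T_gt0 : 0 < T by rewrite lt_neqAle eq_sym T_neq0.
by apply: le_trans (nuP _ X0x0 _ T_gt0 _ _ opt _ (lexx 0)) _; rewrite lee_fin ler_norm.
Qed.

Lemma strictly_dissipative_bounded (alpha : R -> R) (X c : R) : classK alpha -> 0 <= X ->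
  (forall t x u, 0 <= t -> `|x| <= X -> `|u| <= X -> `|ell t x u| <= c) ->
  (forall x0, X0 x0 -> forall T x u, optimal_pair A B E d umin umax ell T x0 x u ->
   forall t, itv0 T t -> [/\ `|x t| <= X, `|u t| <= X, `|xb t| <= X & `|ub t| <= X]) ->
  strictly_dissipative A B E d umin umax ell X0 xb ub alpha.
Proof.
move=> alphaK X_ge0 ell_le bounded; pose Kz := (n + m)%:R * (2 * X).
have c0 : 0 <= c by rewrite (le_trans _ (ell_le 0 0 0 _ _ _)) ?normr0.
have alpha_Kz : 0 <= alpha Kz.
  by case: (alphaK) => _ _ <-; rewrite classK_le ?mulr_ge0.
apply: (strictly_dissipative_turnpike (c := alpha Kz + 2 * c)) => [||x0 X0x0 T x u opt t].
- by case: alphaK.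
- by rewrite addr_ge0 ?mulr_ge0.
move=> /[dup] tT /andP[t0 _]; have [xX uX xbX ubX] := bounded _ X0x0 _ _ _ opt _ tT.
have z_le : znorm (x t - xb t) (u t - ub t) <= Kz.
  apply: le_trans (znorm_le _ _) _; rewrite /Kz natrD mulrDl.
  by rewrite lerD // ler_wpM2l // (le_trans (ler_normB _ _)) //; lra.
have := classK_le alphaK (znorm_ge0 _ _) z_le.
move: (ell_le t _ _ t0 xX uX) (ell_le t _ _ t0 xbX ubX) => /ler_normlP[? ?] /ler_normlP[? ?].
lra.
Qed.

Lemma turnpike_window : exists2 H, 0 < H &
  forall x0, X0 x0 -> forall T x u, optimal_pair A B E d umin umax ell T x0 x u ->
  forall t, 0 <= t <= T -> exists2 s, [&& 0 <= s, s <= t & t <= s + H] & s = 0 \/ x s = xb s.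
Proof.
have [nu nuP] := turnpike; exists (`|nu 0| + 1) => [|x0 X0x0 T x u opt t /andP[t0 tT]].
  by rewrite ltr_wpDl.
have [tH|Ht] := leP t (`|nu 0| + 1); first by exists 0; rewrite ?lexx ?t0 ?add0r //; left.
have T_gt0 : 0 < T by apply: lt_le_trans tT; apply: le_lt_trans Ht; rewrite addr_ge0.
have [|s /andP[tHs st] notTheta] :=
  exists_nmem_measure_lt (Th := Theta T 0 x u xb ub) (a := t - (`|nu 0| + 1)) (b := t).
  rewrite opprB addrC subrK; apply: le_lt_trans (nuP _ X0x0 _ T_gt0 _ _ opt _ (lexx 0)) _.
  by rewrite lte_fin (le_lt_trans (ler_norm _)) // ltrDl.
have s0 : 0 <= s by rewrite (le_trans _ tHs) // subr_ge0 ltW.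
have sT : itv0 T s by rewrite /itv0 /= s0 (le_trans st tT).
by exists s; rewrite ?s0 ?st -?lerBlDr //; right; case: (notin_Theta0 sT notTheta).
Qed.

Lemma turnpike_state_bounded (Kd Kx0 Kxb : R) :
  (forall j, 0 <= umin j ord0) -> (forall t, 0 <= t -> `|d t| <= Kd) ->
  (forall x0, X0 x0 -> `|x0| <= Kx0) -> (forall t, 0 <= t -> `|xb t| <= Kxb) ->
  exists Kx, forall x0, X0 x0 -> forall T x u, optimal_pair A B E d umin umax ell T x0 x u ->
    forall t, 0 <= t <= T -> `|x t| <= Kx.
Proof.
move=> umin0 d_le x0_le xb_le; have [H H_gt0 window] := turnpike_window.
pose L := n%:R * `|A|; pose C := m%:R * `|B| * `|umax| + w%:R * `|E| * Kd.
have Kd0 : 0 <= Kd := le_trans (normr_ge0 _) (d_le 0 (lexx 0)).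
have [||K K_bound] := window_bound (Num.max Kx0 Kxb) (_ : 0 <= L) (_ : 0 <= C) H_gt0.
- exact: mulr_ge0.
- by rewrite addr_ge0 ?mulr_ge0.
exists K => x0 X0x0 T x u opt t tT; have adm := opt.1.
have [s /and3P[s0 st tsH] s_meets] := window _ X0x0 _ _ _ opt _ tT.
have [tT' sT] : t <= T /\ s <= T by case/andP: tT => _ tT'; rewrite tT' (le_trans st).
have growth : linear_growth L C 0 T (fun t => `|x t|).
  apply: (admissible_linear_growth adm) => [r rT|r /andP[r0 _]]; last exact: d_le.
  by case: adm => _ _ u_box _ _; apply/in_box_norm_le/u_box.
have [Kt x_bounded] := admissible_state_bounded adm.
apply: (K_bound (fun t => `|x t|) s t) => //; last by rewrite st lexx.
- case: s_meets => [s_eq0|->]; last by rewrite le_max xb_le ?orbT.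
  by rewrite s_eq0 (admissible_state0 adm) -?s_eq0 // le_max x0_le.
- by exists Kt => r /andP[sr rt]; apply: x_bounded; rewrite (le_trans s0 sr) (le_trans rt).
- exact: linear_growth_sub growth.
Qed.

End turnpike.

Section stage_cost_bound.
Variables (R : realType) (n m : nat) (Q : 'M[R]_n) (S : 'M[R]_(m, n)).
Variables (r : R -> 'cV[R]_n) (p : R -> 'cV[R]_m).

Lemma stage_cost_bounded (X : R) :
  vbounded [set t | 0 <= t] r -> vbounded [set t | 0 <= t] p ->
  exists c, forall t x u, 0 <= t -> `|x| <= X -> `|u| <= X -> `|stage_cost Q S r p t x u| <= c.
Proof.
move=> /vbounded_norm[Kr r_le] /vbounded_norm[Kp p_le].
exists (n%:R * n%:R * `|Q| * (X * X) + m%:R * n%:R * `|S| * (X * X)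
        + n%:R * (X * Kr) + m%:R * (X * Kp)).
move=> t x u t0 xX uX; have rK := r_le t t0; have pK := p_le t t0.
have sq_le : `|x| * `|x| <= X * X by rewrite ler_pM.
rewrite /stage_cost; apply: le_trans (ler_normD _ _) (lerD _ _).
  apply: le_trans (ler_normD _ _) (lerD _ _).
    apply: le_trans (ler_normD _ _) (lerD _ _).
      apply: le_trans (_ : _ <= `|(x^T *m Q *m x) ord0 ord0|) _.
        by rewrite normrM ger0_norm // ler_piMl // invf_le1 ?ler1n.
      by apply: le_trans (norm_bilinear_le x Q x) _; rewrite ler_wpM2l ?mulr_ge0.
    by apply: le_trans (norm_bilinear_le u S x) _; rewrite ler_wpM2l ?mulr_ge0 ?ler_pM.
  by apply: le_trans (norm_dot_le x (r t)) _; rewrite ler_wpM2l ?ler_pM.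
by apply: le_trans (norm_dot_le u (p t)) _; rewrite ler_wpM2l ?ler_pM.
Qed.

End stage_cost_bound.

Unset Implicit Arguments.

Theorem proposition3 (R : realType) (n m w : nat)
  (Ed : {set 'I_n * 'I_n}) (q : 'I_n -> 'I_n -> R) (kappa : 'I_n -> R)
  (prod : 'I_m -> 'I_n) (cons : 'I_w -> 'I_n)
  (X0 : set 'cV[R]_n) (umin umax : 'cV[R]_m)
  (Q : 'M[R]_n) (S : 'M[R]_(m, n))
  (d : R -> 'cV[R]_w) (r : R -> 'cV[R]_n) (p : R -> 'cV[R]_m)
  (xb : R -> 'cV[R]_n) (ub : R -> 'cV[R]_m) :
  valid_network Ed q ->
  (forall v, 0 < kappa v) ->
  injective prod -> injective cons ->
  (forall i j, prod i != cons j) ->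
  compact X0 ->
  (forall j, 0 <= umin j ord0 <= umax j ord0) ->
  Q^T = Q ->
  (* d, r, p bounded (and measurable) on [0, oo) *)
  vbounded [set t | 0 <= t] d -> vbounded [set t | 0 <= t] r ->
  vbounded [set t | 0 <= t] p ->
  vmeasurable [set t | 0 <= t] d -> vmeasurable [set t | 0 <= t] r ->
  vmeasurable [set t | 0 <= t] p ->
  let A := sysA Ed q kappa in
  let B := incid R prod in
  let E := incid R cons in
  let ell := stage_cost Q S r p in
  interior_trajectory A B E d umin umax xb ub ->
  exact_turnpike A B E d umin umax ell X0 xb ub ->
  (exists M : R, forall t, 0 <= t -> znorm (xb t) (ub t) <= M) ->
  forall alpha : R -> R, classK alpha ->
    strictly_dissipative A B E d umin umax ell X0 xb ub alpha.
Proof.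
move=> _ _ _ _ _ X0_compact umin_le _ d_bd r_bd p_bd _ _ _ A B E ell _ turnpike [Mz zb_le].
move=> alpha alphaK.
have umin0 j : 0 <= umin j ord0 by case/andP: (umin_le j).
have [Kd d_le] := vbounded_norm d_bd.
have [Kx0 x0_le] := compact_norm_bounded X0_compact.
have xb_le t : 0 <= t -> `|xb t| <= `|Mz|.
  by move=> t0; rewrite (le_trans (norm_le_znorml _ (ub t))) ?(le_trans (zb_le t t0)) ?ler_norm.
have ub_le t : 0 <= t -> `|ub t| <= `|Mz|.
  by move=> t0; rewrite (le_trans (norm_le_znormr (xb t) _)) ?(le_trans (zb_le t t0)) ?ler_norm.
have [Kx x_le] := turnpike_state_bounded turnpike umin0 d_le x0_le xb_le.
pose X := `|Kx| + `|umax| + `|Mz|.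
have [KxX umaxX MzX] : [/\ Kx <= X, `|umax| <= X & `|Mz| <= X].
  have := ler_norm Kx; have := normr_ge0 Kx; have := normr_ge0 umax; have := normr_ge0 Mz.
  by rewrite /X; split; lra.
have X_ge0 : 0 <= X by rewrite !addr_ge0.
have [c ell_le] := stage_cost_bounded Q S X r_bd p_bd.
apply: (strictly_dissipative_bounded turnpike alphaK X_ge0 ell_le).
move=> x0 X0x0 T x u opt t /[dup] tT /andP[t0 _]; split.
- exact: le_trans (x_le _ X0x0 _ _ _ opt _ tT) KxX.
- by case: opt.1 => _ _ u_box _ _; exact: le_trans (in_box_norm_le umin0 (u_box t tT)) umaxX.
- exact: le_trans (xb_le t t0) MzX.
- exact: le_trans (ub_le t t0) MzX.
Qed.
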